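(* Let $A\subset B(H)$ be an R$^*$-algebra with $\mathrm{id}_H\in A$, and let $p,q$ be projections in $A$. Then the projection onto $pH+qH$ belongs to $A$ and is the least upper bound $p\vee q$ of $p,q$ in the set $\mathcal{P}(A)$ of projections of $A$ (in particular $pH+qH$ is closed); the projection onto $pH\cap qH$ belongs to $A$ and is the greatest lower bound $p\wedge q$ in $\mathcal{P}(A)$; and $1-p$, the projection onto $(pH)^\perp$, belongs to $A$.
   Context: An R$^*$-algebra is a (not necessarily closed) $^*$-subalgebra $A$ of $B(H)$, $H$ a complex Hilbert space, such that for every $x\in A$ there exists $y\in A$ with $xyx=x$; equivalently, every self-adjoint operator in $A$ has finite spectrum. $\mathcal{P}(A)=\{p\in A: p=p^2=p^*\}$ is ordered by $p\le q$ iff $pq=p$ (i.e. $pH\subset qH$). *)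

From HB Require Import structures.
From mathcomp Require Import all_boot all_order all_algebra.
From mathcomp Require Import complex.
From mathcomp Require Import reals.
Set Implicit Arguments. Unset Strict Implicit. Unset Printing Implicit Defensive.
Import Order.TTheory GRing.Theory Num.Theory.
Local Open Scope ring_scope.

Section Hilbert.
Variables (R : realType) (V : lmodType R[i]) (ip : V -> V -> R[i]).

Definition is_inner_product : Prop :=
  [/\ (forall (a : R[i]) x y z, ip (a *: x + y) z = a * ip x z + ip y z),
      (forall x y, ip y x = (ip x y)^*),
      (forall x, 0 <= ip x x) &
      (forall x, ip x x = 0 -> x = 0)].

(* completeness for the norm ||x|| = sqrt (ip x x) (stated with squares) *)
Definition ip_cauchy (u : nat -> V) : Prop :=
  forall e : R[i], 0 < e -> exists N : nat, forall m n : nat,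
    (N <= m)%N -> (N <= n)%N -> ip (u m - u n) (u m - u n) < e.

Definition ip_converges (u : nat -> V) (x : V) : Prop :=
  forall e : R[i], 0 < e -> exists N : nat, forall n : nat,
    (N <= n)%N -> ip (u n - x) (u n - x) < e.

Definition ip_complete : Prop :=
  forall u : nat -> V, ip_cauchy u -> exists x, ip_converges u x.

Definition is_linear_op (T : V -> V) : Prop :=
  forall (a : R[i]) x y, T (a *: x + y) = a *: T x + T y.

Definition is_bounded_op (T : V -> V) : Prop :=
  exists M : R[i], forall x, ip (T x) (T x) <= M * ip x x.

Definition BH (T : V -> V) : Prop := is_linear_op T /\ is_bounded_op T.

Definition is_adjoint (T S : V -> V) : Prop :=
  forall x y, ip (T x) y = ip x (S y).

(* A is a (not necessarily closed) *-subalgebra of B(H) *)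
Definition is_star_subalgebra (A : (V -> V) -> Prop) : Prop :=
  (forall T, A T -> BH T) /\
  [/\ A (fun _ => 0),
      (forall S T, A S -> A T -> A (fun x => S x + T x)),
      (forall (a : R[i]) T, A T -> A (fun x => a *: T x)),
      (forall S T, A S -> A T -> A (S \o T)) &
      (forall T, A T -> exists S, A S /\ is_adjoint T S)].

Definition is_Rstar_algebra (A : (V -> V) -> Prop) : Prop :=
  is_star_subalgebra A /\
  (forall x, A x -> exists y, A y /\ x \o y \o x = x).

Definition is_projection (p : V -> V) : Prop :=
  BH p /\ p \o p = p /\ is_adjoint p p.

Definition projA (A : (V -> V) -> Prop) (p : V -> V) : Prop :=
  A p /\ is_projection p.

Definition proj_le (p q : V -> V) : Prop := p \o q = p.

Definition range (T : V -> V) : V -> Prop := fun y => exists x, T x = y.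

Definition orth (S : V -> Prop) : V -> Prop :=
  fun x => forall y, S y -> ip x y = 0.

End Hilbert.

From HB Require Import structures.
From mathcomp Require Import all_boot all_order all_algebra.
From mathcomp Require Import complex.
From mathcomp Require Import reals.
From mathcomp Require Import boolp.
Set Implicit Arguments. Unset Strict Implicit. Unset Printing Implicit Defensive.
Import Order.TTheory GRing.Theory Num.Theory.
Local Open Scope ring_scope.

(* Everything rests on Kaplansky's range projection: if [x] is in [A], regularity
   gives [x y x = x], so [e = x y] is an idempotent of [A] with range [xH].
   Then [u = e + e^* - 1] is self-adjoint and injective; regularity makes it
   invertible in [A], and [P = e u^-1] is a projection of [A] with [P x = x]
   and [PH] inside [xH].  The range projection of [p + q] is [p \/ q], because
   [p + q] has kernel [ker p /\ ker q]; [p /\ q = 1 - ((1 - p) \/ (1 - q))],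
   since [s |-> 1 - s] reverses the order on projections. *)

Section Operators.
Variables (R : realType) (V : lmodType R[i]).

Definition compl (p : V -> V) : V -> V := fun x => x - p x.

Lemma complK p : compl (compl p) = p.
Proof. by apply: funext => x; rewrite /compl subKr. Qed.

Lemma range_idem (T : V -> V) : (forall v, T (T v) = T v) ->
  forall y, range T y <-> T y = y.
Proof. by move=> TT y; split=> [[x <-] | Ty]; [apply: TT | exists y]. Qed.

Lemma proj_leP (p q : V -> V) : proj_le p q <-> forall v, p (q v) = p v.
Proof. by split=> [pq v | pq]; [exact: (congr1 (@^~ v) pq) | apply: funext]. Qed.

Section LinearOp.
Variable T : V -> V.
Hypothesis Tlin : is_linear_op T.

Lemma linD x y : T (x + y) = T x + T y.
Proof. by have := Tlin 1 x y; rewrite !scale1r. Qed.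

Lemma lin0 : T 0 = 0.
Proof. by apply: (@addrI _ (T 0)); rewrite -linD !addr0. Qed.

Lemma linB x y : T (x - y) = T x - T y.
Proof.
rewrite linD; congr (_ + _); apply: (@addrI _ (T y)).
by rewrite -linD !subrr lin0.
Qed.

End LinearOp.

Lemma compl_idem p : is_linear_op p -> (forall v, p (p v) = p v) ->
  forall v, compl p (compl p v) = compl p v.
Proof. by move=> plin pp v; rewrite /compl (linB plin) pp subrr subr0. Qed.

End Operators.

Section InnerProduct.
Variables (R : realType) (V : lmodType R[i]) (ip : V -> V -> R[i]).
Hypothesis Hip : is_inner_product ip.

Lemma ipDl x y z : ip (x + y) z = ip x z + ip y z.
Proof. by case: Hip => ipl _ _ _; have := ipl 1 x y z; rewrite scale1r mul1r. Qed.

Lemma ip0l z : ip 0 z = 0.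
Proof. by apply: (@addrI _ (ip 0 z)); rewrite -ipDl !addr0. Qed.

Lemma ipBl x y z : ip (x - y) z = ip x z - ip y z.
Proof.
rewrite ipDl; congr (_ + _); apply: (@addrI _ (ip y z)).
by rewrite -ipDl !subrr ip0l.
Qed.

Lemma ipC x y : ip y x = (ip x y)^*.
Proof. by case: Hip => _ ipC _ _; apply: ipC. Qed.

Lemma ipDr x y z : ip z (x + y) = ip z x + ip z y.
Proof. by rewrite !(ipC _ z) ipDl rmorphD. Qed.

Lemma ip0r z : ip z 0 = 0.
Proof. by rewrite ipC ip0l conjC0. Qed.

Lemma ipBr x y z : ip z (x - y) = ip z x - ip z y.
Proof. by rewrite !(ipC _ z) ipBl rmorphB. Qed.

Lemma ip_ge0 x : 0 <= ip x x.
Proof. by case: Hip. Qed.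

Lemma ip_eq0 x : ip x x = 0 -> x = 0.
Proof. by case: Hip => _ _ _; apply. Qed.

Lemma ip_extl a b : (forall y, ip a y = ip b y) -> a = b.
Proof. by move=> ab; apply/subr0_eq/ip_eq0; rewrite ipBl ab subrr. Qed.

Lemma ip_extr a b : (forall y, ip y a = ip y b) -> a = b.
Proof. by move=> ab; apply: ip_extl => y; rewrite ipC [RHS]ipC ab. Qed.

Lemma adjoint_sym (T S : V -> V) : is_adjoint ip T S -> is_adjoint ip S T.
Proof. by move=> TS x y; rewrite ipC -TS [RHS]ipC. Qed.

Lemma selfadj_compC (a b : V -> V) : is_adjoint ip a a -> is_adjoint ip b b ->
  (forall v, a (b v) = a v) <-> (forall v, b (a v) = a v).
Proof.
move=> aadj badj; split=> ab v; apply: ip_extl => z.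
  by rewrite badj aadj ab.
by rewrite aadj badj ab.
Qed.

Lemma selfadj_inverse (u w : V -> V) : is_adjoint ip u u ->
  (forall v, u (w v) = v) -> is_adjoint ip w w.
Proof. by move=> uadj uw a b; rewrite -[in LHS](uw b) -uadj uw. Qed.

Lemma compl_adj p : is_adjoint ip p p -> is_adjoint ip (compl p) (compl p).
Proof. by move=> padj a b; rewrite /compl ipBl ipBr padj. Qed.

Lemma projectionP p : is_projection ip p ->
  [/\ is_linear_op p, forall v, p (p v) = p v & is_adjoint ip p p].
Proof. by case=> -[plin _] [pp padj]; split=> // v; exact: (congr1 (@^~ v) pp). Qed.

Lemma projection_add_eq0 p q a : is_projection ip p -> is_projection ip q ->
  p a + q a = 0 -> p a = 0 /\ q a = 0.
Proof.
case/projectionP=> _ pp padj; case/projectionP=> _ qq qadj paqa.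
have : ip (p a) (p a) + ip (q a) (q a) = 0.
  by rewrite padj pp qadj qq -ipDr paqa ip0r.
move/eqP; rewrite paddr_eq0 ?ip_ge0 // => /andP[/eqP pa0 /eqP qa0].
by split; apply: ip_eq0.
Qed.

Lemma proj_le_compl p q : is_projection ip p -> is_projection ip q ->
  proj_le p q -> proj_le (compl q) (compl p).
Proof.
case/projectionP=> _ _ padj; case/projectionP=> qlin _ qadj.
move/proj_leP/(selfadj_compC padj qadj) => qp; apply/proj_leP => v.
by rewrite /compl (linB qlin) qp opprB addrA subrK.
Qed.

Lemma range_compl p : is_projection ip p ->
  forall y, range (compl p) y <-> orth ip (range p) y.
Proof.
case/projectionP=> plin pp padj y; rewrite range_idem; last exact: compl_idem.
split=> [<- _ [x <-] | yp].
  by rewrite -padj /compl (linB plin) pp subrr ip0l.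
suff py0 : p y = 0 by rewrite /compl py0 subr0.
by apply: ip_eq0; rewrite padj pp; apply: yp; exists y.
Qed.

Definition kaplansky (e f : V -> V) : V -> V := fun v => e v + f v - v.

Section Kaplansky.
Variables e f : V -> V.
Hypotheses (elin : is_linear_op e) (flin : is_linear_op f).
Hypotheses (ee : forall v, e (e v) = e v) (adj : is_adjoint ip e f).

Let u := kaplansky e f.

Lemma adjoint_idem v : f (f v) = f v.
Proof. by apply: ip_extr => z; rewrite -!adj ee. Qed.

Lemma kaplansky_selfadj : is_adjoint ip u u.
Proof.
move=> v z; rewrite /u /kaplansky ipBl ipDl ipBr ipDr adj (adjoint_sym adj).
by rewrite [ip v (f z) + _]addrC.
Qed.

Lemma kaplansky_inj v : u v = 0 -> v = 0.
Proof.
move/subr0_eq => ef.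
have efv : e (f v) = 0.
  by apply: (@addrI _ (e v)); rewrite -{1}ee -(linD elin) ef addr0.
have fv : f v = 0 by apply: ip_eq0; rewrite (adjoint_sym adj) efv ip0r.
by rewrite fv addr0 in ef; apply: ip_eq0; rewrite -{1}ef adj fv ip0r.
Qed.

Lemma e_kaplansky v : e (u v) = e (f v).
Proof. by rewrite /u /kaplansky (linB elin) (linD elin) ee addrC addKr. Qed.

Lemma f_kaplansky v : f (u v) = f (e v).
Proof. by rewrite /u /kaplansky (linB flin) (linD flin) adjoint_idem addrK. Qed.

Lemma kaplansky_e v : u (e v) = f (e v).
Proof. by rewrite /u /kaplansky ee addrC addKr. Qed.

Lemma kaplansky_f v : u (f v) = e (f v).
Proof. by rewrite /u /kaplansky adjoint_idem addrK. Qed.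

Variable w : V -> V.
Hypotheses (wu : forall v, w (u v) = v) (uw : forall v, u (w v) = v).

Lemma kaplansky_inv_e v : w (e v) = f (w v).
Proof. by rewrite -{1}[v]uw e_kaplansky -kaplansky_f wu. Qed.

Lemma kaplansky_inv_f v : w (f v) = e (w v).
Proof. by rewrite -{1}[v]uw f_kaplansky -kaplansky_e wu. Qed.

Lemma kaplansky_projection :
  is_adjoint ip (e \o w) (e \o w) /\ forall v, e (w (e v)) = e v.
Proof.
split=> [a b /= | v]; last by rewrite kaplansky_inv_e -e_kaplansky uw.
by rewrite adj (selfadj_inverse kaplansky_selfadj uw) kaplansky_inv_f.
Qed.

End Kaplansky.

Section RstarAlgebra.
Variable A : (V -> V) -> Prop.
Hypotheses (HA : is_Rstar_algebra ip A) (Hid : A id).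

Lemma Rstar_lin T : A T -> is_linear_op T.
Proof. by case: HA => -[AB _] _ /AB[]. Qed.

Lemma Rstar_add S T : A S -> A T -> A (fun x => S x + T x).
Proof. by case: HA => -[_ [_ Aadd _ _ _]] _; apply: Aadd. Qed.

Lemma Rstar_sub S T : A S -> A T -> A (fun x => S x - T x).
Proof.
case: HA => -[_ [_ Aadd Ascale _ _]] _ AS AT.
have -> : (fun x => S x - T x) = (fun x => S x + (-1) *: T x).
  by apply: funext => x; rewrite scaleN1r.
exact/Aadd/Ascale.
Qed.

Lemma Rstar_comp S T : A S -> A T -> A (S \o T).
Proof. by case: HA => -[_ [_ _ _ Acomp _]] _; apply: Acomp. Qed.

Lemma Rstar_adjoint T : A T -> exists S, A S /\ is_adjoint ip T S.
Proof. by case: HA => -[_ [_ _ _ _ Aadj]] _; apply: Aadj. Qed.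

Lemma Rstar_regular T : A T -> exists S, A S /\ T \o S \o T = T.
Proof. by case: HA => _; apply. Qed.

Lemma projAP p : projA ip A p <->
  [/\ A p, forall v, p (p v) = p v & is_adjoint ip p p].
Proof.
split=> [[Ap /projectionP[]] // | [Ap pp padj]].
case: HA => -[AB _] _; split=> //; split; first exact: AB.
by split=> //; apply: funext.
Qed.

Lemma projA_compl p : projA ip A p -> projA ip A (compl p).
Proof.
case=> Ap /projectionP[plin pp padj]; apply/projAP; split.
- exact: Rstar_sub.
- exact: compl_idem.
- exact: compl_adj.
Qed.

Lemma selfadj_injective_invertible u : A u -> is_adjoint ip u u ->
  (forall v, u v = 0 -> v = 0) ->
  exists w, [/\ A w, forall v, w (u v) = v & forall v, u (w v) = v].
Proof.
move=> Au uadj uinj; have [w [Aw uwu]] := Rstar_regular Au.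
have wu v : w (u v) = v.
  have uwuv : u (w (u v)) = u v := congr1 (@^~ v) uwu.
  by apply/subr0_eq/uinj; rewrite (linB (Rstar_lin Au)) uwuv subrr.
have [w' [_ wadj]] := Rstar_adjoint Aw.
have uw' v : u (w' v) = v by apply: ip_extr => z; rewrite -uadj -wadj wu.
by exists w; split=> // v; rewrite -{1}[v]uw' wu.
Qed.

Lemma range_projection x : A x -> exists P,
  [/\ projA ip A P, forall v, P (x v) = x v & forall y, range P y -> range x y].
Proof.
move=> Ax; have [y [Ay xyx]] := Rstar_regular Ax.
pose e := x \o y.
have Ae : A e by apply: Rstar_comp.
have ex v : e (x v) = x v := congr1 (@^~ v) xyx.
have ee v : e (e v) = e v := ex (y v).
have [f [Af adj]] := Rstar_adjoint Ae.
have elin := Rstar_lin Ae; have flin := Rstar_lin Af.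
have Au : A (kaplansky e f) by apply: Rstar_sub => //; apply: Rstar_add.
have [w [Aw wu uw]] := selfadj_injective_invertible Au
  (kaplansky_selfadj adj) (kaplansky_inj elin ee adj).
have [Padj ePe] := kaplansky_projection elin flin ee adj wu uw.
exists (e \o w); split.
- by apply/projAP; split=> [|v|//]; [exact: Rstar_comp | exact: ePe].
- by move=> v /=; rewrite -ex ePe.
- by move=> _ [v <-]; exists (y (w v)).
Qed.

Lemma projA_join p q : projA ip A p -> projA ip A q ->
  exists r : V -> V,
     projA ip A r /\
     (forall y, range r y <-> exists x1 x2, y = p x1 + q x2) /\
     proj_le p r /\ proj_le q r /\
     (forall s, projA ip A s -> proj_le p s -> proj_le q s -> proj_le r s).
Proof.
case=> Ap Pp; case=> Aq Pq.
have /projectionP[plin _ padj] := Pp; have /projectionP[qlin _ qadj] := Pq.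
have xadj : is_adjoint ip (fun v => p v + q v) (fun v => p v + q v).
  by move=> a b; rewrite ipDl ipDr padj qadj.
have [P [HP Px Prange]] := range_projection (Rstar_add Ap Aq).
have /projAP[AP PP Padj] := HP; have Plin := Rstar_lin AP.
have xP := (selfadj_compC xadj Padj).2 Px.
have pqP v : p (P v) = p v /\ q (P v) = q v.
  have [pv qv] : p (v - P v) = 0 /\ q (v - P v) = 0.
    apply: projection_add_eq0 => //.
    by rewrite (linB plin) (linB qlin) addrACA -opprD xP subrr.
  by split; apply/esym/subr0_eq; rewrite -linB.
have pP := (selfadj_compC padj Padj).1 (fun v => (pqP v).1).
have qP := (selfadj_compC qadj Padj).1 (fun v => (pqP v).2).
exists P; split=> //; split; [|split; [|split]].
- move=> y; split=> [/Prange [v <-] | [x1 [x2 ->]]]; first by exists v, v.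
  by apply/(range_idem PP); rewrite (linD Plin) pP qP.
- by apply/proj_leP => v; case: (pqP v).
- by apply/proj_leP => v; case: (pqP v).
- move=> s [As /projectionP[slin _ sadj]] /proj_leP ps /proj_leP qs.
  have sp := (selfadj_compC padj sadj).1 ps.
  have sq := (selfadj_compC qadj sadj).1 qs.
  apply/proj_leP/(selfadj_compC Padj sadj) => v.
  have [z <-] := Prange (P v) (ex_intro _ v erefl).
  by rewrite (linD slin) sp sq.
Qed.

Lemma projA_meet p q : projA ip A p -> projA ip A q ->
  exists t : V -> V,
     projA ip A t /\
     (forall y, range t y <-> range p y /\ range q y) /\
     proj_le t p /\ proj_le t q /\
     (forall s, projA ip A s -> proj_le s p -> proj_le s q -> proj_le s t).
Proof.
move=> Hp Hq; have Hp' := projA_compl Hp; have Hq' := projA_compl Hq.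
have [r [Hr [rangeE [pr [qr rlub]]]]] := projA_join Hp' Hq'.
have Hr' := projA_compl Hr.
exists (compl r); split=> //; split; [|split; [|split]].
- move=> y; rewrite (range_compl Hr.2) -[p]complK -[q]complK.
  rewrite (range_compl Hp'.2) (range_compl Hq'.2).
  split=> [yr | [yp yq] _ /rangeE [x1 [x2 ->]]].
    split=> _ [x <-]; apply: yr; apply/rangeE.
      by exists x, 0; rewrite /compl (lin0 (Rstar_lin Hq.1)) subrr addr0.
    by exists 0, x; rewrite /compl (lin0 (Rstar_lin Hp.1)) subrr add0r.
  by rewrite ipDr (yp _ (ex_intro _ x1 erefl)) (yq _ (ex_intro _ x2 erefl)) addr0.
- by have := proj_le_compl Hp'.2 Hr.2 pr; rewrite complK.
- by have := proj_le_compl Hq'.2 Hr.2 qr; rewrite complK.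
- move=> s Hs sp sq; have Hs' := projA_compl Hs.
  have := proj_le_compl Hr.2 Hs'.2 (rlub _ Hs' (proj_le_compl Hs.2 Hp.2 sp)
    (proj_le_compl Hs.2 Hq.2 sq)).
  by rewrite complK.
Qed.

End RstarAlgebra.

End InnerProduct.

Theorem proposition4p1 (R : realType) (V : lmodType R[i]) (ip : V -> V -> R[i])
  (Hip : is_inner_product ip) (Hcomplete : ip_complete ip)
  (A : (V -> V) -> Prop) (HA : is_Rstar_algebra ip A) (Hid : A id)
  (p q : V -> V) (Hp : projA ip A p) (Hq : projA ip A q) :
  (* the projection onto pH + qH is in A and is p \/ q in P(A) *)
  (exists r : V -> V,
     projA ip A r /\
     (forall y, range r y <-> exists x1 x2, y = p x1 + q x2) /\
     proj_le p r /\ proj_le q r /\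
     (forall s, projA ip A s -> proj_le p s -> proj_le q s -> proj_le r s)) /\
  (* the projection onto pH /\ qH is in A and is p /\ q in P(A) *)
  (exists t : V -> V,
     projA ip A t /\
     (forall y, range t y <-> range p y /\ range q y) /\
     proj_le t p /\ proj_le t q /\
     (forall s, projA ip A s -> proj_le s p -> proj_le s q -> proj_le s t)) /\
  (* 1 - p is in A and is the projection onto (pH)^perp *)
  (projA ip A (fun x => x - p x) /\
   (forall y, range (fun x => x - p x) y <-> orth ip (range p) y)).
Proof.
split; first exact (projA_join Hip HA Hid Hp Hq).
split; first exact (projA_meet Hip HA Hid Hp Hq).
split; first exact (projA_compl Hip HA Hid Hp).
exact (range_compl Hip Hp.2).
Qed.
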